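(* Let $k,h$ be integers with $k\ge1$ and $h\ge k+2$. Let $T^*(k,h)$ be the tree with vertex set $\{x,z\}\cup\{z_1,\dots,z_k\}\cup\{x_{(i,j)}:1\le i,j\le h-1\}\cup\{y_{(i,j)}:1\le i,j\le h-1\}$ and edge set $\{xx_{(i,j)}:1\le i,j\le h-1\}\cup\{x_{(i,j)}y_{(i,j)}:1\le i,j\le h-1\}\cup\{xz,zz_1,\dots,zz_k\}$. Then $\tau(T^*(k,h))=k$ and $\beta_p(T^*(k,h))=h$.
   Context: Two vertices $u,v$ are twins if $N(u)\setminus\{v\}=N(v)\setminus\{u\}$; the twin number $\tau(G)$ is the maximum cardinality of an equivalence class of the twin relation. For a partition $\Pi=\{S_1,\dots,S_m\}$ of $V(G)$, $r(u|\Pi)=(d(u,S_1),\dots,d(u,S_m))$ with $d(u,S)=\min_{w\in S}d(u,w)$; $\Pi$ is locating if $r(u|\Pi)\ne r(v|\Pi)$ for all distinct $u,v$; $\beta_p(G)$ is the minimum size of a locating partition. *)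

From mathcomp Require Import all_boot.
Set Implicit Arguments. Unset Strict Implicit. Unset Printing Implicit Defensive.

Section Graphs.
Variables (T : finType) (e : rel T).

Fixpoint ball (n : nat) (u : T) : {set T} :=
  match n with
  | 0 => [set u]
  | n'.+1 => ball n' u :|: [set w | [exists v in ball n' u, e v w]]
  end.

(* graph distance (#|T| plays the role of infinity; graphs below are connected) *)
Definition dist (u v : T) : nat :=
  \big[minn/#|T|]_(n < #|T| | v \in ball n u) (n : nat).

Definition dset (u : T) (S : {set T}) : nat :=
  \big[minn/#|T|]_(w in S) dist u w.

Definition locating (P : {set {set T}}) : bool :=
  [forall u, forall v, (u != v) ==> [exists S in P, dset u S != dset v S]].

Definition partition_dim : nat :=
  \big[minn/#|T|]_(P : {set {set T}} | partition P [set: T] && locating P) #|P|.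

Definition nbhd (u : T) : {set T} := [set w | e u w].

Definition twins (u v : T) : bool := (nbhd u :\ v) == (nbhd v :\ u).

Definition twin_number : nat := \max_(u : T) #|[set v | twins u v]|.

End Graphs.

(* Vertices:
   inl None             = x
   inl (Some None)      = z
   inl (Some (Some i))  = z_{i+1}          (i : 'I_k)
   inr (p, false)       = x_{(i+1,j+1)}    (p = (i,j) : 'I_(h-1) * 'I_(h-1))
   inr (p, true)        = y_{(i+1,j+1)}                                      *)
Definition Tvert (k h : nat) : finType :=
  (option (option 'I_k) + (('I_(h - 1) * 'I_(h - 1)) * bool))%type.

Definition Tadj0 (k h : nat) (u v : Tvert k h) : bool :=
  match u, v with
  | inl None, inr (_, false) => true
  | inr (p, false), inr (q, true) => p == q
  | inl None, inl (Some None) => true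
  | inl (Some None), inl (Some (Some _)) => true
  | _, _ => false
  end.

Definition Tadj (k h : nat) : rel (Tvert k h) :=
  fun u v => Tadj0 u v || Tadj0 v u.

From mathcomp Require Import all_boot all_order zify.
Set Implicit Arguments. Unset Strict Implicit. Unset Printing Implicit Defensive.
Import Order.TTheory.

(* Only the leaves z_i of z are twins: they have the same single neighbour, whereas any
   other two vertices are told apart by a neighbour of one of them, so tau = k.

   For beta_p <= h, put z_i and x_(i,j) in class i, y_(i,j) in class j, and x, z in a last
   class. Two vertices in a common class are separated by a class that meets the ball of
   radius 1 or 2 around one of them but not around the other; k < h - 1 keeps the classes
   of z_i away from the class h - 1 used to separate x from z and x_(i,i) from z_i.

   For beta_p >= h: every vertex other than x_p, y_p is at the same distance from all the
   x_p, so in a locating partition the classes of x_p and of y_p (the latter only when it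
   differs from the class X of x) determine x_p.  This gives an injection of the (h-1)^2
   vertices x_p into (X, X) together with the pairs Pi * (Pi \ X), whence
   (h-1)^2 <= 1 + |Pi| (|Pi| - 1) and |Pi| >= h. *)


Lemma bigminn_le_cond (I : finType) (P : pred I) (F : I -> nat) x0 j :
  P j -> \big[minn/x0]_(i | P i) F i <= F j.
Proof. by move=> Pj; have := bigmin_le_cond x0 F Pj; rewrite minEnat. Qed.

Lemma leq_bigminn (I : finType) (P : pred I) (F : I -> nat) x0 c :
  c <= x0 -> (forall i, P i -> c <= F i) -> c <= \big[minn/x0]_(i | P i) F i.
Proof.
move=> c_x0 c_F.
by have := @le_bigmin _ nat _ (index_enum I) F x0 c P c_x0 c_F; rewrite minEnat.
Qed.

Lemma bigminn_eq (I : finType) (P : pred I) (F : I -> nat) x0 j :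
  P j -> F j <= x0 -> (forall i, P i -> F j <= F i) ->
  \big[minn/x0]_(i | P i) F i = F j.
Proof.
move=> Pj Fj_x0 Fj_min; apply/eqP; rewrite eqn_leq bigminn_le_cond //=.
exact: leq_bigminn.
Qed.

Section Graph.
Variables (T : finType) (e : rel T).

Lemma in_ball0 u w : (w \in ball e 0 u) = (w == u).
Proof. by rewrite inE. Qed.

Lemma in_ballS n u w :
  (w \in ball e n.+1 u) = (w \in ball e n u) || [exists v in ball e n u, e v w].
Proof. by rewrite /= in_setU inE. Qed.

Lemma in_ball1 u w : (w \in ball e 1 u) = (w == u) || e u w.
Proof.
rewrite in_ballS in_ball0; congr (_ || _); apply/existsP/idP => [[v]|e_uw].
  by rewrite in_ball0 => /andP[/eqP ->].
by exists u; rewrite in_ball0 eqxx.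
Qed.

Lemma ball_mono m n u : m <= n -> ball e m u \subset ball e n u.
Proof.
elim: n => [|n IHn]; first by rewrite leqn0 => /eqP ->.
rewrite leq_eqVlt => /orP[/eqP -> //|/IHn sub_mn].
by apply: (subset_trans sub_mn); apply/subsetP => w w_n; rewrite in_ballS w_n.
Qed.

Lemma ball_leafS u v n :
  (forall w, e u w = (w == v)) -> ball e n.+1 u \subset u |: ball e n v.
Proof.
move=> N_u; elim: n => [|n IHn]; apply/subsetP => w.
  by rewrite in_ball1 N_u in_setU1 in_ball0.
rewrite in_ballS in_setU1 => /orP[/(subsetP IHn)|/existsP[a /andP[/(subsetP IHn)]]].
  by rewrite in_setU1 in_ballS => /orP[->|->]; rewrite ?orbT.
rewrite in_setU1 => /orP[/eqP ->|a_n e_aw]; rewrite in_ballS.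
  by rewrite N_u => /eqP ->; rewrite (subsetP (ball_mono v (leq0n n))) ?orbT ?in_ball0.
by apply/orP; right; apply/orP; right; apply/existsP; exists a; rewrite a_n.
Qed.

Lemma dist_le u w d : d < #|T| -> w \in ball e d u -> dist e u w <= d.
Proof.
move=> d_lt w_d.
exact: (@bigminn_le_cond _ (fun n : 'I_#|T| => w \in ball e n u) val _ (Ordinal d_lt)).
Qed.

Lemma dist_gt u w d : d < #|T| -> w \notin ball e d u -> d < dist e u w.
Proof.
move=> d_lt w_d; apply: leq_bigminn => // i w_i; rewrite ltnNge.
by apply: contra w_d => i_d; apply: (subsetP (ball_mono u i_d)).
Qed.

Lemma dset_le u (S : {set T}) d w :
  d < #|T| -> w \in S -> w \in ball e d u -> dset e u S <= d.
Proof.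
move=> d_lt w_S w_d.
exact: leq_trans (bigminn_le_cond _ _ w_S) (dist_le d_lt w_d).
Qed.

Lemma dset_gt u (S : {set T}) d :
  d < #|T| -> [disjoint S & ball e d u] -> d < dset e u S.
Proof.
move=> d_lt S_d; apply: leq_bigminn => // w w_S.
by apply: dist_gt => //; rewrite (disjointFr S_d w_S).
Qed.

Lemma dset_neq_ball u v (S : {set T}) d w :
  d < #|T| -> w \in S -> w \in ball e d u -> [disjoint S & ball e d v] ->
  dset e u S != dset e v S.
Proof.
move=> d_lt w_S w_d S_d; rewrite neq_ltn.
by rewrite (leq_ltn_trans (dset_le d_lt w_S w_d) (dset_gt d_lt S_d)).
Qed.

Section Potential.
Variables (phi : T -> nat) (u : T).
Hypothesis phi0 : forall w, (phi w == 0) = (w == u).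
Hypothesis phi_lipschitz : forall a b, e a b -> phi b <= (phi a).+1.
Hypothesis phi_descent : forall w, 0 < phi w -> exists2 a, e a w & phi a < phi w.

Lemma in_ball_potential n w : (w \in ball e n u) = (phi w <= n).
Proof.
elim: n w => [|n IHn] w; first by rewrite in_ball0 leqn0 phi0.
rewrite in_ballS IHn; apply/idP/idP.
  case/orP=> [/leqW //|/existsP[a /andP[]]].
  by rewrite IHn => a_n /phi_lipschitz/leq_trans->.
rewrite leq_eqVlt ltnS => /orP[/eqP phi_w|->//]; apply/orP; right.
have [|a e_aw lt_aw] := @phi_descent w; first by rewrite phi_w.
by apply/existsP; exists a; rewrite IHn e_aw -ltnS -phi_w lt_aw.
Qed.

Lemma dist_potential w : phi w < #|T| -> dist e u w = phi w.
Proof.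
move=> phi_lt; apply/eqP; rewrite eqn_leq dist_le ?in_ball_potential //=.
case: (posnP (phi w)) => [-> //|phi_gt0]; rewrite -(prednK phi_gt0).
by apply: dist_gt; rewrite ?in_ball_potential -?ltnNge prednK // ltnW.
Qed.

End Potential.

Lemma twins_refl u : twins e u u.
Proof. exact: eqxx. Qed.

Lemma twinsC u v : twins e u v = twins e v u.
Proof. exact: eq_sym. Qed.

Lemma neighbour_not_twins u v w : e u w -> w != v -> ~~ e v w -> ~~ twins e u v.
Proof.
move=> e_uw w_v e_vw; apply: contraNN e_vw => /eqP N_uv.
have : w \in nbhd e u :\ v by rewrite in_setD1 w_v inE.
by rewrite N_uv in_setD1 inE => /andP[].
Qed.

Lemma partition_dim_le P :
  partition P [set: T] -> locating e P -> partition_dim e <= #|P|.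
Proof. by move=> P_part P_loc; apply: bigminn_le_cond; rewrite P_part. Qed.

Lemma partition_dim_ge c : c <= #|T| ->
  (forall P, partition P [set: T] -> locating e P -> c <= #|P|) ->
  c <= partition_dim e.
Proof. by move=> c_T c_P; apply: leq_bigminn => // P /andP[]; apply: c_P. Qed.

End Graph.

Section Tree.
Variables (k h : nat).
Hypothesis k_gt0 : 0 < k.
Hypothesis kh : k + 2 <= h.

Local Notation T := (Tvert k h).
Local Notation e := (@Tadj k h).
Local Notation n := (h - 1).
Local Notation vX := (inl None : T).
Local Notation vZ := (inl (Some None) : T).
Local Notation vL t := (inl (Some (Some t)) : T).
Local Notation vA p := (inr (p, false) : T).
Local Notation vB p := (inr (p, true) : T).

Lemma card_Tvert : #|T| = k.+2 + n * n * 2.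
Proof. by rewrite card_sum !card_option !card_prod !card_ord card_bool. Qed.

Lemma k_lt_n : k < n.
Proof. lia. Qed.

Lemma card_Tvert_gt3 : 3 < #|T|.
Proof. by rewrite card_Tvert; have := k_lt_n; nia. Qed.

Lemma eq_pair_vertex p q b c : (inr (p, b) == inr (q, c) :> T) = (p == q) && (b == c).
Proof. by []. Qed.

Lemma Tadj_zleaf t w : e (vL t) w = (w == vZ).
Proof. by case: w => [[[?|]|]|[? []]]. Qed.

Lemma Tadj_ypair p w : e (vB p) w = (w == vA p).
Proof.
by case: w => [[[?|]|]|[q []]]; rewrite /Tadj //= eq_pair_vertex ?andbT ?andbF.
Qed.

Definition is_zleaf (u : T) : bool := if u is inl (Some (Some _)) then true else false.

Definition t0 : 'I_k := Ordinal k_gt0.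
Definition i0 : 'I_n := Ordinal (ltn_trans k_gt0 k_lt_n).

Ltac distinguish w :=
  apply: (@neighbour_not_twins _ _ _ _ w);
  by rewrite /Tadj /= ?eq_pair_vertex ?eqxx ?andbT ?andbF ?orbF //= 1?eq_sym.

Lemma twinsE u v : twins e u v = (u == v) || is_zleaf u && is_zleaf v.
Proof.
have [<-|neq] := eqVneq u v; first by rewrite twins_refl.
case: u neq => [[[t|]|]|[p []]]; case: v => [[[s|]|]|[q []]] //=;
  rewrite ?eq_pair_vertex ?andbT ?andbF => neq.
- apply/eqP/setP => w; rewrite !inE !Tadj_zleaf.
  by case: (w =P vZ) => [->|]; rewrite ?andbF.
all: apply/negbTE.
all: first [ distinguish constr:(vX) | distinguish constr:(vZ)
           | distinguish (vL t0) | distinguish (vA (i0, i0))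
           | distinguish (vA p) | distinguish (vB p)
           | rewrite twinsC; first [ distinguish constr:(vX) | distinguish constr:(vZ)
                                   | distinguish (vA (i0, i0))
                                   | distinguish (vA q) | distinguish (vB q) ] ].
Qed.

Lemma card_twin_class u : #|[set v | twins e u v]| = if is_zleaf u then k else 1.
Proof.
case: ifP => u_leaf.
  have -> : [set v | twins e u v] = (fun t => vL t) @: [set: 'I_k].
    apply/setP => v; rewrite inE twinsE u_leaf.
    case: u u_leaf => [[[t|]|]|?] // _.
    case: v => [[[s|]|]|?] /=; rewrite ?orbT.
    - by rewrite imset_f.
    1-3: by symmetry; apply: negbTE; apply/imsetP => -[].
  by rewrite card_imset ?cardsT ?card_ord // => s t [].
have -> : [set v | twins e u v] = [set u].
  by apply/setP => v; rewrite !inE twinsE u_leaf andFb orbF eq_sym.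
exact: cards1.
Qed.

Lemma twin_number_tree : twin_number e = k.
Proof.
apply/eqP; rewrite eqn_leq; apply/andP; split.
  by apply/bigmax_leqP => u _; rewrite card_twin_class; case: ifP.
by apply: leq_trans (leq_bigmax (vL t0)); rewrite card_twin_class.
Qed.

Definition block_idx (w : T) : nat :=
  match w with
  | inl (Some (Some t)) => t
  | inl _ => n
  | inr ((i, _), false) => i
  | inr ((_, j), true) => j
  end.

Definition block (l : nat) : {set T} := [set w | block_idx w == l].

Definition blocks : {set {set T}} := (fun l : 'I_h => block l) @: [set: 'I_h].

Lemma block_idx_lt w : block_idx w < h.
Proof.
have := k_lt_n; case: w => [[[t|]|]|[[i j] []]] /=; try lia.
- by have := ltn_ord t; lia.
- by have := ltn_ord j; lia.
- by have := ltn_ord i; lia.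
Qed.

Lemma block_idx_surj l : l < h -> exists w, block_idx w = l.
Proof.
case: (ltnP l n) => [l_n|n_l] l_h; first by exists (vA (Ordinal l_n, Ordinal l_n)).
by exists vX; rewrite /=; lia.
Qed.

Lemma block_in_blocks l : l < h -> block l \in blocks.
Proof. by move=> l_h; apply/imsetP; exists (Ordinal l_h). Qed.

Lemma blocks_partition : partition blocks [set: T].
Proof.
apply/and3P; split.
- apply/eqP/setP => w; rewrite inE; apply/bigcupP.
  by exists (block (block_idx w)); rewrite ?block_in_blocks ?block_idx_lt ?inE.
- apply/trivIsetP => _ _ /imsetP[l _ ->] /imsetP[l' _ ->] neq.
  rewrite -setI_eq0; apply: contraNT neq => /set0Pn[w].
  by rewrite !inE => /andP[/eqP <- /eqP <-].
- apply/imsetP => -[l _ E]; have [w w_l] := block_idx_surj (ltn_ord l).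
  have : w \in block l by rewrite inE w_l.
  by rewrite -E inE.
Qed.

Lemma card_blocks : #|blocks| = h.
Proof.
rewrite card_imset ?cardsT ?card_ord // => l l' E; apply: val_inj.
have [w w_l] := block_idx_surj (ltn_ord l).
have : w \in block l by rewrite inE w_l.
by rewrite E inE w_l => /eqP.
Qed.

Lemma block_idx_ball1_xpair i j w :
  w \in ball e 1 (vA (i, j)) -> block_idx w \in [:: i : nat; j : nat; n].
Proof.
rewrite in_ball1; case: w => [[[?|]|]|[[i' j'] []]]; rewrite /Tadj /= ?inE ?eqxx ?orbT //.
all: rewrite ?eq_pair_vertex ?andbT ?andbF ?xpair_eqE ?orbF => /andP[/eqP ? /eqP ?]; subst.
all: by rewrite eqxx ?orbT.
Qed.

Lemma block_idx_ball1_ypair i j w :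
  w \in ball e 1 (vB (i, j)) -> block_idx w \in [:: i : nat; j : nat].
Proof.
move/(subsetP (ball_leafS 0 (Tadj_ypair (i, j)))).
by rewrite in_setU1 in_ball0 => /orP[] /eqP ->; rewrite !inE eqxx ?orbT.
Qed.

Lemma block_idx_ball1_zleaf t w :
  w \in ball e 1 (vL t) -> block_idx w \in [:: t : nat; n].
Proof.
move/(subsetP (ball_leafS 0 (Tadj_zleaf t))).
by rewrite in_setU1 in_ball0 => /orP[] /eqP ->; rewrite !inE eqxx ?orbT.
Qed.

Lemma block_idx_ball1_z w : w \in ball e 1 vZ -> (block_idx w < k) || (block_idx w == n).
Proof.
by rewrite in_ball1; case: w => [[[t|]|]|[? []]] //= _; rewrite ?ltn_ord ?eqxx ?orbT.
Qed.

Lemma block_idx_ball2_zleaf t w :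
  w \in ball e 2 (vL t) -> (block_idx w < k) || (block_idx w == n).
Proof.
move/(subsetP (ball_leafS 1 (Tadj_zleaf t))).
by rewrite in_setU1 => /orP[/eqP -> /=|/block_idx_ball1_z //]; rewrite ltn_ord.
Qed.

Definition resolves (u v : T) : bool := [exists S in blocks, dset e u S != dset e v S].

Lemma resolvesC u v : resolves u v = resolves v u.
Proof. by apply/existsP/existsP => -[S]; rewrite eq_sym; exists S. Qed.

Lemma resolves_ball u v d w : d < #|T| -> w \in ball e d u ->
  (forall w', w' \in ball e d v -> block_idx w' != block_idx w) -> resolves u v.
Proof.
move=> d_lt w_d far; apply/existsP; exists (block (block_idx w)).
rewrite block_in_blocks ?block_idx_lt //=.
apply: (dset_neq_ball d_lt _ w_d); first by rewrite inE.
by rewrite disjoint_sym disjoint_subset; apply/subsetP => w' /far; rewrite !inE.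
Qed.

Lemma npred_lt : n.-1 < n.
Proof. by rewrite ltn_predL (leq_ltn_trans _ k_lt_n). Qed.

Definition xtop : T := vA (Ordinal npred_lt, i0).

Lemma resolves_x_z : resolves vX vZ.
Proof.
have := card_Tvert_gt3; have := k_lt_n => kn T3.
apply: (@resolves_ball _ _ 1 xtop).
- lia.
- by rewrite in_ball1.
- by move=> w /block_idx_ball1_z /=; lia.
Qed.

Lemma resolves_xpair_zleaf (i j : 'I_n) (t : 'I_k) :
  (t : nat) = i -> resolves (vA (i, j)) (vL t).
Proof.
move=> ti; have := card_Tvert_gt3; have := k_lt_n => kn T3.
have [->|ji] := eqVneq j i.
  apply: (@resolves_ball _ _ 2 xtop).
  - lia.
  - by rewrite in_ballS; apply/orP; right; apply/existsP; exists vX; rewrite in_ball1.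
  - by move=> w /block_idx_ball2_zleaf /=; lia.
apply: (@resolves_ball _ _ 1 (vB (i, j))).
- lia.
- by rewrite in_ball1 /Tadj /= eqxx orbT.
- move=> w /block_idx_ball1_zleaf; rewrite !inE ti /=.
  by move: ji; rewrite -val_eqE /=; have := ltn_ord j; lia.
Qed.

Lemma resolves_zleaf_ypair t (i j : 'I_n) : resolves (vL t) (vB (i, j)).
Proof.
have := card_Tvert_gt3 => T3; apply: (@resolves_ball _ _ 1 vZ).
- lia.
- by rewrite in_ball1.
- move=> w /block_idx_ball1_ypair; rewrite !inE /=.
  by have := ltn_ord i; have := ltn_ord j; lia.
Qed.

Lemma resolves_xpair_ypair p (i j : 'I_n) : resolves (vA p) (vB (i, j)).
Proof.
have := card_Tvert_gt3 => T3; apply: (@resolves_ball _ _ 1 vX).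
- lia.
- by rewrite in_ball1.
- move=> w /block_idx_ball1_ypair; rewrite !inE /=.
  by have := ltn_ord i; have := ltn_ord j; lia.
Qed.

Lemma resolves_xpair_xpair (i j j' : 'I_n) : j != j' -> resolves (vA (i, j)) (vA (i, j')).
Proof.
wlog ji : j j' / j != i.
  move=> gen jj'; have [j_i|ji] := eqVneq j i; last exact: gen.
  by rewrite resolvesC; apply: gen; rewrite eq_sym // -j_i.
move=> jj'; have := card_Tvert_gt3 => T3.
apply: (@resolves_ball _ _ 1 (vB (i, j))).
- lia.
- by rewrite in_ball1 /Tadj /= eqxx orbT.
- move=> w /block_idx_ball1_xpair; rewrite !inE /=.
  by move: ji jj'; rewrite -!val_eqE /=; have := ltn_ord j; lia.
Qed.

Lemma resolves_ypair_ypair (i i' j : 'I_n) : i != i' -> resolves (vB (i, j)) (vB (i', j)).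
Proof.
wlog ij : i i' / i != j.
  move=> gen ii'; have [i_j|ij] := eqVneq i j; last exact: gen.
  by rewrite resolvesC; apply: gen; rewrite eq_sym // -i_j.
move=> ii'; have := card_Tvert_gt3 => T3.
apply: (@resolves_ball _ _ 1 (vA (i, j))).
- lia.
- by rewrite in_ball1 /Tadj /= eqxx orbT.
- move=> w /block_idx_ball1_ypair; rewrite !inE /=.
  by move: ij ii'; rewrite -!val_eqE /=; lia.
Qed.

Lemma resolves_distinct u v : u != v -> resolves u v.
Proof.
have [same|diff] := eqVneq (block_idx u) (block_idx v); last first.
  move=> _; apply: (@resolves_ball _ _ 0 u); rewrite ?in_ball0 //.
    by have := card_Tvert_gt3; lia.
  by move=> w; rewrite in_ball0 => /eqP ->; rewrite eq_sym.
have := k_lt_n; move: same.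
case: u => [[[t|]|]|[[i j] []]]; case: v => [[[t'|]|]|[[i' j'] []]] /= same kn neq;
  try (have := ltn_ord t); try (have := ltn_ord t'); try (have := ltn_ord i');
  try (have := ltn_ord j'); try (have := ltn_ord i); try (have := ltn_ord j); intros.
(* x and z alone have block index n; all other indices are ordinals below n. *)
all: try by exfalso; lia.
all: try by rewrite eqxx in neq.
- by move: neq; rewrite (val_inj same) eqxx.
- exact: resolves_zleaf_ypair.
- by rewrite resolvesC; apply: resolves_xpair_zleaf.
- by rewrite resolvesC; apply: resolves_x_z.
- exact: resolves_x_z.
- by rewrite resolvesC; apply: resolves_zleaf_ypair.
- move: neq; rewrite (val_inj same) eq_pair_vertex xpair_eqE eqxx !andbT.
  exact: resolves_ypair_ypair.
- by rewrite resolvesC; apply: resolves_xpair_ypair.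
- exact: resolves_xpair_zleaf.
- exact: resolves_xpair_ypair.
- move: neq; rewrite (val_inj same) eq_pair_vertex xpair_eqE eqxx /= andbT.
  exact: resolves_xpair_xpair.
Qed.

Lemma blocks_locating : locating e blocks.
Proof.
by apply/forallP => u; apply/forallP => v; apply/implyP; apply: resolves_distinct.
Qed.

Definition dist_from_xpair (p : 'I_n * 'I_n) (w : T) : nat :=
  match w with
  | inl None => 1
  | inl (Some None) => 2
  | inl (Some (Some _)) => 3
  | inr (q, false) => if q == p then 0 else 2
  | inr (q, true) => if q == p then 1 else 3
  end.

Lemma dist_from_xpair_eq0 p w : (dist_from_xpair p w == 0) = (w == vA p).
Proof.
by case: w => [[[?|]|]|[q []]] //=; rewrite eq_pair_vertex ?andbT ?andbF; case: (q =P p).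
Qed.

Lemma dist_xpairE p w : dist e (vA p) w = dist_from_xpair p w.
Proof.
apply: dist_potential; first exact: dist_from_xpair_eq0.
- case=> [[[?|]|]|[q []]] [[[?|]|]|[r []]]; rewrite /Tadj //= ?orbF.
  - by case: (_ == p).
  - by move=> /eqP ->; case: (_ == p).
  - by move=> /eqP ->; case: (_ == p).
- case=> [[[?|]|]|[q []]] /=.
  + by exists vZ.
  + by exists vX.
  + by exists (vA p); rewrite //= eqxx.
  + by exists (vA q); rewrite /Tadj /= ?eqxx //; case: ifP.
  + by case: ifP => // _ _; exists vX.
- apply: leq_ltn_trans card_Tvert_gt3.
  by case: w => [[[?|]|]|[q []]] //=; case: eqP.
Qed.

Lemma dset_xpair p (S : {set T}) : dset e (vA p) S =
  if vA p \in S then 0 else if (vX \in S) || (vB p \in S) then 1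
  else \big[minn/#|T|]_(w in S) dist_from_xpair p w.
Proof.
rewrite /dset; under eq_bigr do rewrite dist_xpairE.
have T3 := card_Tvert_gt3; case: ifP => [xp_S|xp_S].
  have -> : 0 = dist_from_xpair p (vA p) by rewrite /= eqxx.
  by apply: (bigminn_eq xp_S) => //; rewrite /= eqxx.
have pos w : w \in S -> 1 <= dist_from_xpair p w.
  by rewrite lt0n dist_from_xpair_eq0 => w_S; apply: contraFneq xp_S => <-.
case: ifP => // /orP[x_S|yp_S].
  by apply: (bigminn_eq x_S) => //; apply: leq_trans T3.
have -> : 1 = dist_from_xpair p (vB p) by rewrite /= eqxx.
by apply: (bigminn_eq yp_S); rewrite /= eqxx //; apply: leq_trans T3.
Qed.

Lemma dist_from_xpair_eq p q w : w \notin [:: vA p; vB p; vA q; vB q] ->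
  dist_from_xpair p w = dist_from_xpair q w.
Proof.
case: w => [[[?|]|]|[r []]] //=; rewrite !inE !eq_pair_vertex !andbT !andbF /= ?orbF.
all: by case/norP=> /negbTE -> /negbTE ->.
Qed.

Lemma dset_xpair_eq p q (S : {set T}) :
  (vA p \in S) = (vA q \in S) ->
  (vA p \notin S -> (vX \in S) || (vB p \in S) = (vX \in S) || (vB q \in S)) ->
  dset e (vA p) S = dset e (vA q) S.
Proof.
move=> xpq yE; rewrite !dset_xpair -xpq; case: ifP => // /negbT xp_S.
have {}yE := yE xp_S; rewrite -yE; case: ifP => // /negbT y_S.
have /norP[_ yp_S] := y_S; move: y_S; rewrite yE => /norP[_ yq_S].
have xq_S : vA q \notin S by rewrite -xpq.
apply: eq_bigr => w w_S; apply: dist_from_xpair_eq.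
by apply: contraTN w_S; rewrite !inE => /or4P[] /eqP ->.
Qed.

Section LowerBound.
Variable P : {set {set T}}.
Hypotheses (P_part : partition P [set: T]) (P_loc : locating e P).

Local Notation pb := (pblock P).

Lemma pblock_in w : pb w \in P.
Proof. by case/and3P: P_part => /eqP cover_P _ _; rewrite pblock_mem // cover_P inE. Qed.

Lemma mem_partition_block S w : S \in P -> (w \in S) = (S == pb w).
Proof.
case/and3P: P_part => /eqP cover_P triv_P _ S_P.
apply/idP/eqP => [w_S|->]; first by rewrite (def_pblock triv_P S_P w_S).
by rewrite mem_pblock cover_P inE.
Qed.

Definition signature (p : 'I_n * 'I_n) : {set T} * {set T} :=
  (pb (vA p), if pb (vB p) == pb vX then pb (vA p) else pb (vB p)).

Lemma signatureE p S : S \in P -> vA p \notin S ->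
  (vX \in S) || (vB p \in S) = (S == pb vX) || (S == (signature p).2).
Proof.
move=> S_P; rewrite /= !(mem_partition_block _ S_P).
case: (pb (vB p) =P pb vX) => [->|_ //].
by rewrite orbb => /negbTE ->; rewrite orbF.
Qed.

Lemma signature_inj : injective signature.
Proof.
move=> p q [E1 E2]; apply/eqP; apply: contraT => neq.
have /existsP[S /andP[S_P]] : [exists S in P, dset e (vA p) S != dset e (vA q) S].
  move/forallP/(_ (vA p))/forallP/(_ (vA q))/implyP: P_loc; apply.
  by rewrite eq_pair_vertex andbT.
have xpq : (vA p \in S) = (vA q \in S) by rewrite !(mem_partition_block _ S_P) E1.
case/negP; apply/eqP/dset_xpair_eq => // xp_S.
have xq_S : vA q \notin S by rewrite -xpq.
by rewrite (signatureE S_P xp_S) (signatureE S_P xq_S) /= E2.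
Qed.

Lemma signature_range p : signature p \in (pb vX, pb vX) |: setX P (P :\ pb vX).
Proof.
rewrite /signature; case: ifP => [_|y_x]; rewrite !inE /= !pblock_in ?y_x ?orbT //.
have [->|neq] := eqVneq (pb (vA p)) (pb vX); first by rewrite eqxx.
by apply/orP; right; apply/and3P.
Qed.

Lemma locating_card_ge : h <= #|P|.
Proof.
have card_sig : #|signature @: [set: 'I_n * 'I_n]| = n * n.
  by rewrite card_imset ?cardsT ?card_prod ?card_ord //; apply: signature_inj.
have sub_range :
    signature @: [set: 'I_n * 'I_n] \subset (pb vX, pb vX) |: setX P (P :\ pb vX).
  by apply/subsetP => _ /imsetP[p _ ->]; apply: signature_range.
have := leq_trans (subset_leq_card sub_range) (leq_card_setU _ _).
rewrite card_sig cards1 cardsX; have := cardsD1 (pb vX) P; rewrite pblock_in.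
move: #|P :\ _| => m ->; have := k_lt_n; nia.
Qed.

End LowerBound.

End Tree.

Theorem proposition7 (k h : nat) (hk : 1 <= k) (hh : k + 2 <= h) :
  twin_number (@Tadj k h) = k /\ partition_dim (@Tadj k h) = h.
Proof.
split; first exact: twin_number_tree.
apply/eqP; rewrite eqn_leq; apply/andP; split.
  apply: leq_trans (eq_leq (card_blocks hk hh)).
  exact: partition_dim_le (blocks_partition hk hh) (blocks_locating hk hh).
apply: partition_dim_ge => [|P]; last exact: locating_card_ge.
by rewrite card_Tvert; nia.
Qed.
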